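(* Let $\mathcal G=(V,E)$ be a finite connected undirected graph with strictly positive edge weights, let $d$ denote the weighted shortest-path distance, and let $\mathcal O\subseteq V$. Suppose that for every $u\in V$ there exist $o_1,o_2\in\mathcal O$ such that there is a unique shortest path $\mathcal P(o_1,o_2)$ between $o_1$ and $o_2$ and $u$ lies on $\mathcal P(o_1,o_2)$. Then $\mathcal O$ is a double resolving set of $\mathcal G$, i.e., for any two distinct nodes $x,y\in V$ there exist $u,v\in\mathcal O$ such that $d(x,u)-d(x,v)\neq d(y,u)-d(y,v)$.
   Context: A set $S\subseteq V$ is a double resolving set (DRS) of $\mathcal G$ if for any two distinct $x,y\in V$ there exist $u,v\in S$ with $d(x,u)-d(x,v)\ne d(y,u)-d(y,v)$. *)

From HB Require Import structures.
From mathcomp Require Import all_boot all_order all_algebra.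
Set Implicit Arguments. Unset Strict Implicit. Unset Printing Implicit Defensive.
Import Order.TTheory GRing.Theory Num.Theory.
Local Open Scope ring_scope.

Section WeightedGraph.
Variables (R : realFieldType) (V : finType).
Variable (e : rel V) (w : V -> V -> R).

Definition weighted_graph : Prop :=
  [/\ symmetric e, irreflexive e,
      (forall x y, w x y = w y x) & (forall x y, e x y -> 0 < w x y)].

Definition connected_graph : Prop := forall x y : V, connect e x y.

Definition walk (x y : V) (p : seq V) : Prop := path e x p /\ last x p = y.

Definition wlen (x : V) (p : seq V) : R :=
  \sum_(ab <- zip (x :: p) p) w ab.1 ab.2.

Definition is_sp_dist (d : V -> V -> R) : Prop :=
  forall x y : V,
    (exists p, walk x y p /\ wlen x p = d x y) /\
    (forall p, walk x y p -> d x y <= wlen x p).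

Definition shortest_path (d : V -> V -> R) (x y : V) (p : seq V) : Prop :=
  walk x y p /\ wlen x p = d x y.

Definition on_unique_sp (d : V -> V -> R) (o1 o2 u : V) : Prop :=
  exists p, [/\ shortest_path d o1 o2 p,
                (forall q, shortest_path d o1 o2 q -> q = p)
              & u \in o1 :: p].

Definition double_resolving (d : V -> V -> R) (S : {set V}) : Prop :=
  forall x y : V, x != y ->
    exists u v, [/\ u \in S, v \in S & d x u - d x v != d y u - d y v].

End WeightedGraph.

(** If all of [O] saw [x] and [y] alike, [d(x,o) - d(y,o)] would be a constant [c] on [O].
    Take [o1, o2] whose unique geodesic passes through [x]: the triangle inequality through
    [y] gives [c <= 0]; symmetrically, with the geodesic through [y], [c >= 0]. Hence [c = 0],
    so [y] also lies on a geodesic from [o1] to [o2]; by uniqueness it is the one through [x],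
    and on it [y] and [x] are at the same distance from [o1]. Positive weights force [y = x]. *)
From HB Require Import structures.
From mathcomp Require Import all_boot all_order all_algebra.
From mathcomp Require Import lra.
Set Implicit Arguments. Unset Strict Implicit. Unset Printing Implicit Defensive.
Import Order.TTheory GRing.Theory Num.Theory.
Local Open Scope ring_scope.

Section Walks.
Variables (R : realFieldType) (V : finType) (e : rel V) (w : V -> V -> R).

Lemma wlen_nil x : wlen w x [::] = 0.
Proof. by rewrite /wlen big_nil. Qed.

Lemma wlen_cons x a p : wlen w x (a :: p) = w x a + wlen w a p.
Proof. by rewrite /wlen /= big_cons. Qed.

Lemma wlen_cat x p q : wlen w x (p ++ q) = wlen w x p + wlen w (last x p) q.
Proof.
elim: p x => [|a p IH] x /=; first by rewrite wlen_nil add0r.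
by rewrite !wlen_cons IH addrA.
Qed.

Lemma walk_cat x y z p q : walk e x y p -> walk e y z q -> walk e x z (p ++ q).
Proof. by case=> hp hpy [hq hqz]; split; rewrite ?cat_path ?last_cat hpy ?hp. Qed.

Lemma cat_prefix (r1 r2 s1 s2 : seq V) : r1 ++ r2 = s1 ++ s2 ->
  (exists t, s1 = r1 ++ t) \/ (exists t, r1 = s1 ++ t).
Proof.
elim: r1 s1 => [|a r1 IH] s1; first by left; exists s1.
case: s1 => [|b s1] /=; first by right; exists (a :: r1).
by case=> -> /IH [[t ->]|[t ->]]; [left|right]; exists t.
Qed.

Hypothesis wsym : forall x y, w x y = w y x.
Hypothesis e_sym : symmetric e.

Lemma last_rev_belast (x : V) p : last (last x p) (rev (belast x p)) = x.
Proof. by case: p => [|a p] //=; rewrite rev_cons last_rcons. Qed.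

Lemma wlen_rev x p : wlen w (last x p) (rev (belast x p)) = wlen w x p.
Proof.
elim: p x => [|a p IH] x //=.
rewrite rev_cons -cats1 wlen_cat IH last_rev_belast !wlen_cons wlen_nil.
by rewrite wsym addr0 addrC.
Qed.

Lemma walk_rev x y p : walk e x y p -> walk e y x (rev (belast x p)).
Proof.
case=> hp <-; split; last exact: last_rev_belast.
by rewrite rev_path (@eq_path _ _ e) // => a b /=; rewrite e_sym.
Qed.

Hypothesis wpos : forall x y, e x y -> 0 < w x y.

Lemma wlen_ge0 x p : path e x p -> 0 <= wlen w x p.
Proof.
elim: p x => [|a p IH] x /=; first by rewrite wlen_nil.
by case/andP=> hxa /IH; rewrite wlen_cons; have := wpos hxa; lra.
Qed.

Lemma wlen_gt0 x p : path e x p -> p != [::] -> 0 < wlen w x p.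
Proof.
case: p => [|a p] //= /andP[hxa /wlen_ge0 hp] _; rewrite wlen_cons.
by have := wpos hxa; lra.
Qed.

(* Positive weights make prefix lengths strictly increasing. *)
Lemma path_prefix_wlen_inj o r1 r2 s1 s2 :
  path e o (r1 ++ r2) -> r1 ++ r2 = s1 ++ s2 -> wlen w o r1 = wlen w o s1 -> r1 = s1.
Proof.
move=> hp; wlog [t ->] : r1 r2 s1 s2 hp / exists t, s1 = r1 ++ t.
  move=> hwlog hrs hl; have [hsr|hsr] := cat_prefix hrs; first exact: hwlog hsr hrs hl.
  by apply/esym/(hwlog s1 s2 r1 r2); rewrite -?hrs.
move=> hrs; rewrite hrs -catA cat_path in hp; case/andP: hp => _; clear hrs.
rewrite wlen_cat; case: t => [|a t]; rewrite ?cats0 // cat_path => /andP[ht _] hl.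
by exfalso; have := wlen_gt0 ht isT; lra.
Qed.

End Walks.

Section ShortestPaths.
Variables (R : realFieldType) (V : finType) (e : rel V) (w : V -> V -> R).
Variable d : V -> V -> R.
Hypothesis hd : is_sp_dist e w d.

Lemma sp_dist_le x y p : walk e x y p -> d x y <= wlen w x p.
Proof. exact: (hd x y).2. Qed.

Lemma sp_dist_triangle x y z : d x z <= d x y + d y z.
Proof.
have [[p [hp <-]] _] := hd x y; have [[q [hq <-]] _] := hd y z.
by have := sp_dist_le (walk_cat hp hq); rewrite wlen_cat; case: hp => _ ->.
Qed.

Lemma sp_dist_sym (wsym : forall x y, w x y = w y x) (e_sym : symmetric e) x y :
  d x y = d y x.
Proof.
suff le_d a b : d a b <= d b a by apply/eqP; rewrite eq_le !le_d.
have [[p [hp <-]] _] := hd b a.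
by have := sp_dist_le (walk_rev e_sym hp); case: hp => _ <-; rewrite wlen_rev.
Qed.

Lemma shortest_path_cat x y z p q :
  shortest_path e w d x y p -> shortest_path e w d y z q ->
  d x z = d x y + d y z -> shortest_path e w d x z (p ++ q).
Proof.
case=> hp hlp [hq hlq] hxz; split; first exact: walk_cat hp hq.
by rewrite wlen_cat hp.2 hlp hlq hxz.
Qed.

Lemma shortest_path_split x y p z : shortest_path e w d x y p -> z \in x :: p ->
  exists r1 r2, [/\ p = r1 ++ r2, shortest_path e w d x z r1
                  & d x y = d x z + d z y].
Proof.
case=> [[hp hl] hlen] hz; move: hp hl hlen; case/splitPl: hz => r1 r2 hr1.
rewrite cat_path last_cat wlen_cat hr1 => /andP[h1 h2] hl hlen.
have := sp_dist_le (conj h1 hr1); have := sp_dist_le (conj h2 hl).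
have := sp_dist_triangle x z y => *.
by exists r1, r2; split=> //; [split=> // | ]; lra.
Qed.

(* The geodesic through [y] is, by uniqueness, the one through [x]. *)
Lemma on_unique_sp_eq (wpos : forall x y, e x y -> 0 < w x y) o1 o2 x y :
  on_unique_sp e w d o1 o2 x -> d o1 o2 = d o1 y + d y o2 -> d o1 y = d o1 x -> y = x.
Proof.
case=> p [hsp huniq hx] hy hyx.
have [r1 [r2 [hpr [[_ hr1x] hr1len] _]]] := shortest_path_split hsp hx.
have [[s1 hs1] _] := hd o1 y; have [[s2 hs2] _] := hd y o2.
have hps := huniq _ (shortest_path_cat hs1 hs2 hy).
have hpath : path e o1 (r1 ++ r2) by rewrite -hpr; case: hsp => [[]].
have hrs1 : r1 = s1.
  apply: (path_prefix_wlen_inj (s2 := s2) wpos hpath); first by rewrite -hpr hps.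
  by rewrite hr1len hs1.2 hyx.
by rewrite -hr1x hrs1; case: hs1 => [[_ ->]].
Qed.

End ShortestPaths.

Theorem lemma2 (R : realFieldType) (V : finType) (e : rel V) (w : V -> V -> R)
  (d : V -> V -> R) (O : {set V}) :
  weighted_graph e w ->
  connected_graph e ->
  is_sp_dist e w d ->
  (forall u : V, exists o1 o2, [/\ o1 \in O, o2 \in O & on_unique_sp e w d o1 o2 u]) ->
  double_resolving d O.
Proof.
case=> e_sym _ wsym wpos _ hd hO x y xy.
have [/existsP[u /existsP[v /and3P[hu hv huv]]]|] :=
  boolP [exists u, exists v, [&& u \in O, v \in O & d x u - d x v != d y u - d y v]].
  by exists u, v.
rewrite negb_exists => /forallP no_res.
have cst u v : u \in O -> v \in O -> d x u - d y u = d x v - d y v.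
  move=> hu hv; move: (no_res u); rewrite negb_exists => /forallP/(_ v).
  by rewrite hu hv negbK => /eqP; lra.
have dsym := sp_dist_sym hd wsym e_sym; have tri := sp_dist_triangle hd.
have [o1 [o2 [ho1 ho2 hx]]] := hO x; have [o1' [o2' [ho1' ho2' hy]]] := hO y.
have [p [hsp _ hxp]] := hx; have [q [hsq _ hyq]] := hy.
have [_ [_ [_ _ dx]]] := shortest_path_split hd hsp hxp.
have [_ [_ [_ _ dy]]] := shortest_path_split hd hsq hyq.
have cst_o2 := cst _ _ ho1 ho2.
have x_closer : d x o1 <= d y o1.
  by have := tri o1 y o2; have := dsym o1 x; have := dsym o1 y; lra.
have y_closer : d y o1 <= d x o1.
  have := tri o1' x o2'; have := cst _ _ ho1 ho1'; have := cst _ _ ho1 ho2'.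
  by have := dsym o1' x; have := dsym o1' y; lra.
have same_o1 : d x o1 = d y o1 by apply/eqP; rewrite eq_le x_closer y_closer.
have same_o2 : d x o2 = d y o2 by lra.
suff /eqP : y = x by rewrite eq_sym (negbTE xy).
apply: (on_unique_sp_eq hd wpos hx).
  by rewrite dx same_o2 (dsym o1 x) same_o1 (dsym o1 y).
by rewrite (dsym o1 x) same_o1 (dsym o1 y).
Qed.
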